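(* Let $\mathcal V$ be a multivector field on $X$ and let $S\subset X$ be a locally closed, $\mathcal V$-compatible invariant set. Then $S$ is an isolated invariant set (indeed $\operatorname{cl}S$ isolates $S$).
   Context: $X$ is a finite $T_0$ topological space. For $A\subset X$, $\operatorname{cl}A$ is its closure and $\operatorname{mo}A:=\operatorname{cl}A\setminus A$. $A$ is locally closed if it is the intersection of an open and a closed subset of $X$. $H$ denotes relative singular homology. A multivector is a nonempty locally closed subset of $X$; a multivector field $\mathcal V$ on $X$ is a partition of $X$ into multivectors. For $x\in X$, $[x]$ denotes the element of $\mathcal V$ containing $x$. A multivector $V$ is critical if $H(\operatorname{cl}V,\operatorname{mo}V)\neq0$, regular otherwise. $A\subset X$ is $\mathcal V$-compatible if for every $x\in X$ either $[x]\cap A=\emptyset$ or $[x]\subset A$. Put $\Pi_{\mathcal V}(x):=[x]\cup\operatorname{cl}\{x\}$ and $\Pi_{\mathcal V}(A):=\bigcup_{x\in A}\Pi_{\mathcal V}(x)$. A $\mathbb Z$-interval is $\mathbb Z\cap I$ for a real interval $I$. A solution in $A\subset X$ is a map $\varphi:D\to A$ on a $\mathbb Z$-interval $D$ with $\varphi(i+1)\in\Pi_{\mathcal V}(\varphi(i))$ whenever $i,i+1\in D$; it is full if $D=\mathbb Z$, and a path if $D$ is bounded, its endpoints being $\varphi(\min D)$ and $\varphi(\max D)$. A full solution $\varphi$ is essential if for every $t\in\mathbb Z$ with $[\varphi(t)]$ regular, the set $\{s\in\mathbb Z:\varphi(s)\notin[\varphi(t)]\}$ is unbounded below and unbounded above.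 $\operatorname{Inv}A$ is the set of $x\in A$ such that there is an essential full solution $\varphi$ with image in $A$ and $\varphi(0)=x$; $A$ is invariant if $\operatorname{Inv}A=A$. A closed set $N$ isolates an invariant set $S\subset N$ if (a) every path in $N$ with both endpoints in $S$ has image contained in $S$, and (b) $\Pi_{\mathcal V}(S)\subset N$. An invariant set is an isolated invariant set if some closed set isolates it. *)

From HB Require Import structures.
From mathcomp Require Import all_boot all_order all_algebra.
Set Implicit Arguments. Unset Strict Implicit. Unset Printing Implicit Defensive.
Import Order.TTheory GRing.Theory Num.Theory.
Local Open Scope ring_scope.

(** A topology on a finite type, given by its family of open sets
    (for a finite carrier, closure under binary unions/intersections suffices). *)
Definition is_topology (X : finType) (O : {set {set X}}) : Prop :=
  [/\ set0 \in O, setT \in O,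
      (forall U W, U \in O -> W \in O -> U :|: W \in O) &
      (forall U W, U \in O -> W \in O -> U :&: W \in O)].

Definition T0 (X : finType) (O : {set {set X}}) : Prop :=
  forall x y : X, x != y -> exists2 U, U \in O & (x \in U) != (y \in U).

Definition closedb (X : finType) (O : {set {set X}}) (A : {set X}) : bool :=
  ~: A \in O.

Definition cl (X : finType) (O : {set {set X}}) (A : {set X}) : {set X} :=
  [set x | [forall B : {set X}, (closedb O B && (A \subset B)) ==> (x \in B)]].

Definition mo (X : finType) (O : {set {set X}}) (A : {set X}) : {set X} :=
  cl O A :\: A.

Definition locally_closed (X : finType) (O : {set {set X}}) (A : {set X}) : Prop :=
  exists U C, [/\ U \in O, closedb O C & A = U :&: C].

(** ---- Relative homology of a pair (K, L), L ⊂ K ⊂ X, computed (via McCord's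
    theorem) as relative simplicial homology with integer coefficients of the
    order complexes of the specialization order x < y :<=> x <> y /\ x ∈ cl{y}. *)
Definition spec_lt (X : finType) (O : {set {set X}}) (x y : X) : bool :=
  (x != y) && (x \in cl O [set y]).

Definition simplex (X : finType) (O : {set {set X}}) (A : {set X}) (s : seq X) : bool :=
  [&& s != [::], all (fun x => x \in A) s & sorted (spec_lt O) s].

(** integer chains as formal sums (finite lists of coefficient/simplex pairs) *)
Definition coef (X : finType) (c : seq (int * seq X)) (s : seq X) : int :=
  \sum_(p <- c | p.2 == s) p.1.

Definition face (X : Type) (s : seq X) (i : nat) : seq X := take i s ++ drop i.+1 s.

Definition bd (X : finType) (c : seq (int * seq X)) : seq (int * seq X) :=
  flatten [seq [seq ((-1) ^+ i * p.1, face p.2 i) | i <- iota 0 (size p.2)] | p <- c].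

Definition chain_in (X : finType) (O : {set {set X}}) (K : {set X}) (n : nat)
    (c : seq (int * seq X)) : Prop :=
  forall p, p \in c -> simplex O K p.2 /\ size p.2 = n.+1.

Definition rel_cycle (X : finType) (O : {set {set X}}) (K L : {set X}) (n : nat)
    (c : seq (int * seq X)) : Prop :=
  chain_in O K n c /\
  forall s, simplex O K s -> ~~ simplex O L s -> coef (bd c) s = 0.

Definition rel_boundary (X : finType) (O : {set {set X}}) (K L : {set X}) (n : nat)
    (c : seq (int * seq X)) : Prop :=
  exists d, chain_in O K n.+1 d /\
  forall s, simplex O K s -> ~~ simplex O L s -> coef c s = coef (bd d) s.

Definition rel_homology_nonzero (X : finType) (O : {set {set X}}) (K L : {set X}) : Prop :=
  exists n c, rel_cycle O K L n c /\ ~ rel_boundary O K L n c.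

Definition critical (X : finType) (O : {set {set X}}) (V : {set X}) : Prop :=
  rel_homology_nonzero O (cl O V) (mo O V).

Definition multivector (X : finType) (O : {set {set X}}) (A : {set X}) : Prop :=
  A != set0 /\ locally_closed O A.

Definition multivector_field (X : finType) (O : {set {set X}}) (V : {set {set X}}) : Prop :=
  partition V [set: X] /\ forall A, A \in V -> multivector O A.

(** [x] is pblock V x *)
Definition compatible (X : finType) (V : {set {set X}}) (A : {set X}) : Prop :=
  forall x : X, [disjoint pblock V x & A] \/ pblock V x \subset A.

Definition Pi (X : finType) (O : {set {set X}}) (V : {set {set X}}) (x : X) : {set X} :=
  pblock V x :|: cl O [set x].

Definition PiS (X : finType) (O : {set {set X}}) (V : {set {set X}}) (A : {set X}) : {set X} :=
  \bigcup_(x in A) Pi O V x.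

Definition full_solution_in (X : finType) (O : {set {set X}}) (V : {set {set X}})
    (A : {set X}) (phi : int -> X) : Prop :=
  (forall t, phi t \in A) /\ (forall t, phi (t + 1) \in Pi O V (phi t)).

Definition essential (X : finType) (O : {set {set X}}) (V : {set {set X}})
    (phi : int -> X) : Prop :=
  forall t, ~ critical O (pblock V (phi t)) ->
    (forall m, exists s, s < m /\ phi s \notin pblock V (phi t)) /\
    (forall m, exists s, m < s /\ phi s \notin pblock V (phi t)).

Definition in_Inv (X : finType) (O : {set {set X}}) (V : {set {set X}})
    (A : {set X}) (x : X) : Prop :=
  exists phi, [/\ full_solution_in O V A phi, essential O V phi & phi 0 = x].

Definition invariant_set (X : finType) (O : {set {set X}}) (V : {set {set X}})
    (A : {set X}) : Prop :=
  forall x, x \in A <-> in_Inv O V A x.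

Definition isolates (X : finType) (O : {set {set X}}) (V : {set {set X}})
    (N S : {set X}) : Prop :=
  [/\ closedb O N, S \subset N,
      (forall (phi : int -> X) (a b : int), a <= b ->
         (forall i, a <= i <= b -> phi i \in N) ->
         (forall i, a <= i < b -> phi (i + 1) \in Pi O V (phi i)) ->
         phi a \in S -> phi b \in S ->
         forall i, a <= i <= b -> phi i \in S)
    & PiS O V S \subset N].

Definition isolated_invariant (X : finType) (O : {set {set X}}) (V : {set {set X}})
    (S : {set X}) : Prop :=
  invariant_set O V S /\ exists N, isolates O V N S.

From HB Require Import structures.
From mathcomp Require Import all_boot all_order all_algebra.
From mathcomp Require Import zify.
Set Implicit Arguments. Unset Strict Implicit. Unset Printing Implicit Defensive.
Import Order.TTheory GRing.Theory Num.Theory.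

(** Write S = U ∩ C with U open and C closed.  For x in the mouth cl S \ S,
    any y ∈ cl {x} ∩ S lies in the open set U, hence so does x; as x ∈ cl S ⊂ C
    this would put x in S.  So cl {x} misses S, and by compatibility so does
    the multivector [x].  Thus a solution running inside cl S that leaves S
    stays in the mouth and never returns, which is condition (a) for cl S;
    condition (b), Π(S) ⊂ cl S, is compatibility again.  Neither the T0 axiom
    nor the critical/regular distinction plays any role. *)

Section FiniteTopology.
Variables (X : finType) (O : {set {set X}}).

Lemma clP (A : {set X}) x :
  reflect (forall B, closedb O B -> A \subset B -> x \in B) (x \in cl O A).
Proof.
rewrite inE; apply: (iffP forallP) => [clx B cB sAB | clx B].
  by have := clx B; rewrite cB sAB.
by apply/implyP => /andP[]; apply: clx.
Qed.

Lemma subset_cl (A : {set X}) : A \subset cl O A.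
Proof. by apply/subsetP => x Ax; apply/clP => B _ /subsetP; apply. Qed.

Lemma cl_sub_closed (A C : {set X}) : closedb O C -> A \subset C -> cl O A \subset C.
Proof. by move=> cC sAC; apply/subsetP => x /clP; apply. Qed.

Lemma cl_subset (A B : {set X}) : A \subset B -> cl O A \subset cl O B.
Proof.
move=> sAB; apply/subsetP => x /clP clAx; apply/clP => C cC sBC.
exact: clAx cC (subset_trans sAB sBC).
Qed.

Lemma closed_cl (A : {set X}) : is_topology O -> closedb O (cl O A).
Proof.
case=> O0 _ OU _; rewrite /closedb.
have -> : ~: cl O A = \bigcup_(B | closedb O B && (A \subset B)) ~: B.
  apply/setP => x; rewrite inE; apply/idP/idP => [|/bigcupP[B /andP[cB sAB]]].
    apply: contraR => /bigcupP nUx; apply/clP => B cB sAB; apply/negPn/negP => nBx.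
    by apply: nUx; exists B; rewrite ?cB ?inE.
  by rewrite inE; apply: contraNN => /clP; apply.
by apply: (big_ind (fun U => U \in O)) => // B /andP[].
Qed.

Lemma open_mem_cl1 (U : {set X}) x y :
  U \in O -> y \in cl O [set x] -> y \in U -> x \in U.
Proof.
move=> UO /clP clxy Uy; apply: contraT => Ux.
have : y \in ~: U by apply: clxy; rewrite ?sub1set ?inE // /closedb setCK.
by rewrite inE Uy.
Qed.

Lemma locally_closed_cl1_mo (A : {set X}) x :
  locally_closed O A -> x \in mo O A -> [disjoint cl O [set x] & A].
Proof.
case=> U [C [UO cC ->]] /setDP[clx nAx]; apply/pred0P => y /=.
apply/andP => -[clxy /setIP[Uy _]]; move/negP: nAx; apply; apply/setIP; split.
  exact: open_mem_cl1 clxy Uy.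
exact: subsetP (cl_sub_closed cC (subsetIr U C)) x clx.
Qed.

End FiniteTopology.

Lemma partitionT_mem_pblock (X : finType) (P : {set {set X}}) x :
  partition P [set: X] -> x \in pblock P x.
Proof. by case/and3P => /eqP cP _ _; rewrite mem_pblock cP inE. Qed.

Local Open Scope ring_scope.

Lemma int_ind_up (P : int -> Prop) (i b : int) :
  i <= b -> P i -> (forall j, i <= j < b -> P j -> P (j + 1)) -> P b.
Proof.
move=> le_ib Pi Pstep.
have Pshift (k : nat) : i + k%:Z <= b -> P (i + k%:Z).
  elim: k => [|k IHk] le_kb; first by rewrite addr0.
  have -> : i + k.+1%:Z = (i + k%:Z) + 1 by lia.
  by apply: Pstep; [lia | apply: IHk; lia].
have -> : b = i + `|b - i|%N%:Z by lia.
by apply: Pshift; lia.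
Qed.

Section CompatibleLocallyClosed.
Variables (X : finType) (O : {set {set X}}) (V : {set {set X}}) (S : {set X}).
Hypotheses (Vpart : partition V [set: X]) (Slc : locally_closed O S)
  (Scomp : compatible V S).

Let mem_pblock_V x : x \in pblock V x := partitionT_mem_pblock x Vpart.

Lemma compatible_pblock_sub x : x \in S -> pblock V x \subset S.
Proof.
move=> Sx; case: (Scomp x) => // /pred0P/(_ x) /=.
by rewrite mem_pblock_V Sx.
Qed.

Lemma compatible_pblock_disjoint x : x \notin S -> [disjoint pblock V x & S].
Proof.
move=> nSx; case: (Scomp x) => // /subsetP/(_ x (mem_pblock_V x)).
by rewrite (negbTE nSx).
Qed.

Lemma PiS_sub_cl : PiS O V S \subset cl O S.
Proof.
apply/bigcupsP => x Sx; apply/subUsetP; split.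
  exact: subset_trans (compatible_pblock_sub Sx) (subset_cl O S).
by apply: cl_subset; rewrite sub1set.
Qed.

Lemma Pi_mo_disjoint x : x \in mo O S -> [disjoint Pi O V x & S].
Proof.
move=> mox; rewrite -setI_eq0 setIUl setU_eq0 !setI_eq0 locally_closed_cl1_mo // andbT.
by apply: compatible_pblock_disjoint; case/setDP: mox.
Qed.

Lemma solution_in_cl_stays_in_mo (phi : int -> X) (i b : int) :
  i <= b ->
  (forall j, i <= j <= b -> phi j \in cl O S) ->
  (forall j, i <= j < b -> phi (j + 1) \in Pi O V (phi j)) ->
  phi i \notin S -> phi b \in mo O S.
Proof.
move=> le_ib in_cl step nSi.
apply: (int_ind_up (P := fun j => phi j \in mo O S) (i := i)) => //=.
  by rewrite inE nSi in_cl // lexx le_ib.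
move=> j /andP[le_ij lt_jb] moj; rewrite inE in_cl ?andbT; last by lia.
by apply/negbT/(disjointFr (Pi_mo_disjoint moj))/step; lia.
Qed.

Lemma cl_isolates : is_topology O -> isolates O V (cl O S) S.
Proof.
move=> HO; split; [exact: closed_cl | exact: subset_cl | | exact: PiS_sub_cl].
move=> phi a b le_ab in_cl step Sa Sb i /andP[le_ai le_ib]; apply: contraT => nSi.
have : phi b \in mo O S.
  apply: (solution_in_cl_stays_in_mo (i := i)) => // j ?.
    by apply: in_cl; lia.
  by apply: step; lia.
by rewrite inE Sb.
Qed.

End CompatibleLocallyClosed.

Theorem proposition4p12 (X : finType) (O : {set {set X}})
    (HO : is_topology O) (HT0 : T0 O)
    (V : {set {set X}}) (HV : multivector_field O V)
    (S : {set X}) (HSlc : locally_closed O S) (HScomp : compatible V S)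
    (HSinv : invariant_set O V S) :
  isolated_invariant O V S /\ isolates O V (cl O S) S.
Proof.
have iso := cl_isolates HV.1 HSlc HScomp HO.
by split; [split; [| exists (cl O S)] |].
Qed.
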